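(* Let $A\subset\mathbb R^\tau$ be a compact max-min convex set and let $\xi\colon J(A)\to A$ be the max-min barycenter map $\xi(\mu)=(\mu(p_\alpha))_{\alpha<\tau}$. Then $(A,\xi)$ is a $\mathbb J$-algebra, i.e. $\xi\circ\eta_A=1_A$ and $\xi\circ\psi_A=\xi\circ J(\xi)$.
   Context: A max-min measure on a compact Hausdorff space $X$ is a functional $\mu\colon C(X)\to\mathbb R$ (not assumed continuous) with $\mu(c_X)=c$ for constants, $\mu(\varphi\vee\psi)=\mu(\varphi)\vee\mu(\psi)$, $\mu(c\wedge\varphi)=c\wedge\mu(\varphi)$ for $c\in\mathbb R$; $J(X)$ is the set of max-min measures with the topology of pointwise convergence on $C(X)$; for continuous $f$, $J(f)(\mu)(\varphi)=\mu(\varphi\circ f)$. $\eta_X(x)=\delta_x$ with $\delta_x(\varphi)=\varphi(x)$; $\psi_X\colon J(J(X))\to J(X)$ is $\psi_X(M)(\varphi)=M(\bar\varphi)$, $\bar\varphi(\mu)=\mu(\varphi)$. $p_\alpha\colon A\to\mathbb R$ is the $\alpha$-th coordinate projection. A subset $A\subset\mathbb R^\tau$ is max-min convex if $x\vee(\lambda\wedge y)\in A$ for all $x,y\in A$, $\lambda\in\mathbb R$ (coordinatewise operations); for such compact $A$, $\xi$ takes values in $A$. *)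

From Stdlib Require Import Reals List.
Open Scope R_scope.

(* A "space" is described by a carrier type S, a subset D : S -> Prop, and a
   family G of real-valued generating maps on S; D carries the initial
   (weak) topology induced by G (subspace topology). *)

Definition open_in {S : Type} (D : S -> Prop) (G : (S -> R) -> Prop)
  (U : S -> Prop) : Prop :=
  forall x, D x -> U x ->
    exists (l : list (S -> R)) (d : R),
      Forall G l /\ 0 < d /\
      forall y, D y -> (forall g, In g l -> Rabs (g y - g x) < d) -> U y.

Definition compact_in {S : Type} (D : S -> Prop) (G : (S -> R) -> Prop) : Prop :=
  forall (Idx : Type) (U : Idx -> S -> Prop),
    (forall i, open_in D G (U i)) ->
    (forall x, D x -> exists i, U i x) ->
    exists l : list Idx, forall x, D x -> exists i, In i l /\ U i x.

Definition cont_map {S T : Type} (D : S -> Prop) (G : (S -> R) -> Prop)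
  (D' : T -> Prop) (G' : (T -> R) -> Prop) (f : S -> T) : Prop :=
  (forall x, D x -> D' (f x)) /\
  forall U, open_in D' G' U -> open_in D G (fun x => U (f x)).

Definition Rdom : R -> Prop := fun _ => True.
Definition Rgen : (R -> R) -> Prop := fun g => g = (fun t => t).

Definition Ccont {S : Type} (D : S -> Prop) (G : (S -> R) -> Prop) (phi : S -> R) : Prop :=
  cont_map D G Rdom Rgen phi.

(* max-min measures; a functional on C(X) is represented by a total map
   (S -> R) -> R whose values only matter on continuous functions, and which
   depends only on the restriction of phi to X. *)
Definition is_maxmin {S : Type} (D : S -> Prop) (G : (S -> R) -> Prop)
  (mu : (S -> R) -> R) : Prop :=
  (forall phi psi, Ccont D G phi -> Ccont D G psi ->
      (forall x, D x -> phi x = psi x) -> mu phi = mu psi) /\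
  (forall c : R, mu (fun _ => c) = c) /\
  (forall phi psi, Ccont D G phi -> Ccont D G psi ->
      mu (fun x => Rmax (phi x) (psi x)) = Rmax (mu phi) (mu psi)) /\
  (forall (c : R) phi, Ccont D G phi ->
      mu (fun x => Rmin c (phi x)) = Rmin c (mu phi)).

(* J(X): carrier is_maxmin D G, with the topology of pointwise convergence on C(X) *)
Definition Jdom {S : Type} (D : S -> Prop) (G : (S -> R) -> Prop) :
  ((S -> R) -> R) -> Prop := is_maxmin D G.
Definition Jgen {S : Type} (D : S -> Prop) (G : (S -> R) -> Prop) :
  (((S -> R) -> R) -> R) -> Prop :=
  fun h => exists phi, Ccont D G phi /\ h = (fun mu => mu phi).

Definition eta {S : Type} (x : S) : (S -> R) -> R := fun phi => phi x.
Definition psiJ {S : Type} (M : (((S -> R) -> R) -> R) -> R) : (S -> R) -> R :=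
  fun phi => M (fun mu => mu phi).
Definition Jmap {S T : Type} (f : S -> T) (mu : (S -> R) -> R) : (T -> R) -> R :=
  fun phi => mu (fun x => phi (f x)).

(* R^tau with the product topology: generated by coordinate projections *)
Definition coord_gen (I : Type) : ((I -> R) -> R) -> Prop :=
  fun g => exists a : I, g = (fun x => x a).

Definition maxmin_convex {I : Type} (A : (I -> R) -> Prop) : Prop :=
  forall x y, A x -> A y -> forall lam : R,
    A (fun a => Rmax (x a) (Rmin lam (y a))).

Definition xi {I : Type} (mu : ((I -> R) -> R) -> R) : I -> R :=
  fun a => mu (fun x => x a).

(* The two monad laws
   hold by unfolding: xi(delta_x) = x and xi(psi M)_a = M(mu |-> mu(p_a)) =
   xi(J(xi) M)_a.  The content of the theorem is that xi is a continuous map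
   J(A) -> A, and continuity is immediate once xi(mu) lies in A, since each
   coordinate mu |-> mu(p_a) is a generator of the topology of J(A).
   To show xi(mu) in A we argue as follows.
   - Continuity on A is handled through an epsilon-delta characterisation
     of the initial topology, so that max, min with constants and
     Lipschitz functions of coordinates are continuous.
   - A max-min measure is monotone and satisfies a cut principle; with
     steep piecewise-linear "barrier" functions of finitely many coordinates
     this yields points of A lying almost below xi(mu) on given coordinates.
   - Max-min convexity glues such points into a point of A which is
     d-close to xi(mu) on any finite set of coordinates.
   - Compactness of A makes the complement of A open in R^I, so xi(mu),
     which is approximated arbitrarily well by points of A, belongs to A. *)
From Stdlib Require Import Reals List Lra Classical FunctionalExtensionality.
Open Scope R_scope.

Lemma Rmax_nonexpansive u v u' v' :
  Rabs (Rmax u v - Rmax u' v') <= Rmax (Rabs (u - u')) (Rabs (v - v')).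
Proof. unfold Rmax; repeat destruct Rle_dec; unfold Rabs in *; repeat destruct Rcase_abs; lra. Qed.

Lemma Rmin_nonexpansive u v u' v' :
  Rabs (Rmin u v - Rmin u' v') <= Rmax (Rabs (u - u')) (Rabs (v - v')).
Proof. unfold Rmax, Rmin; repeat destruct Rle_dec; unfold Rabs in *; repeat destruct Rcase_abs; lra. Qed.

Section InitialTopology.
Context {S : Type} (D : S -> Prop) (G : (S -> R) -> Prop).

Definition eps_cont (f : S -> R) : Prop :=
  forall x, D x -> forall e, 0 < e -> exists (l : list (S -> R)) (d : R),
    Forall G l /\ 0 < d /\
    forall y, D y -> (forall g, In g l -> Rabs (g y - g x) < d) -> Rabs (f y - f x) < e.

Lemma eps_cont_Ccont f : eps_cont f -> Ccont D G f.
Proof.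
  intros Hf. split; [intros; constructor|].
  intros U HU x Hx Ux.
  destruct (HU (f x) ltac:(constructor) Ux) as [l0 [d0 [Hl0 [Hd0 HU0]]]].
  destruct (Hf x Hx d0 Hd0) as [l [d [Hl [Hd Hy]]]].
  exists l, d. split; [|split]; auto.
  intros y Dy Hc. apply HU0; [constructor|].
  intros g Hg. rewrite Forall_forall in Hl0. specialize (Hl0 g Hg). unfold Rgen in Hl0.
  subst g. apply Hy; auto.
Qed.

Lemma Ccont_eps_cont f : Ccont D G f -> eps_cont f.
Proof.
  intros [_ Hf] x Hx e He.
  set (U := fun t => Rabs (t - f x) < e).
  assert (HU : open_in Rdom Rgen U).
  { intros t _ Ht. exists ((fun u => u) :: nil), (e - Rabs (t - f x)).
    split; [constructor; [reflexivity|constructor]|split; [unfold U in Ht; lra|]].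
    intros y _ Hy. specialize (Hy (fun u => u) (or_introl eq_refl)). simpl in Hy.
    unfold U. pose proof (Rabs_triang (y - t) (t - f x)) as T.
    replace (y - t + (t - f x)) with (y - f x) in T by ring. lra. }
  assert (Hfx : U (f x)) by (unfold U; rewrite Rminus_diag, Rabs_R0; exact He).
  destruct (Hf U HU x Hx Hfx) as [l [d [Hl [Hd Hy]]]].
  exists l, d. auto.
Qed.

Lemma eps_cont_const (b : R) : eps_cont (fun _ => b).
Proof.
  intros x Hx e He. exists nil, 1. split; [constructor|split; [lra|]].
  intros. rewrite Rminus_diag, Rabs_R0. exact He.
Qed.

Lemma eps_cont_gen g : G g -> eps_cont g.
Proof.
  intros Hg x Hx e He. exists (g :: nil), e.
  split; [constructor; [exact Hg|constructor]|split; [exact He|]].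
  intros y _ Hy. apply Hy. left; reflexivity.
Qed.

Lemma eps_cont_lipschitz g (f : R -> R) L :
  eps_cont g -> 0 < L -> (forall u v, Rabs (f u - f v) <= L * Rabs (u - v)) ->
  eps_cont (fun y => f (g y)).
Proof.
  intros Hg HL Hf x Hx e He.
  destruct (Hg x Hx (e / L) ltac:(apply Rdiv_lt_0_compat; lra)) as [l [d [Hl [Hd Hy]]]].
  exists l, d. split; [|split]; auto.
  intros y Dy Hc. specialize (Hy y Dy Hc). eapply Rle_lt_trans; [apply Hf|].
  apply Rmult_lt_compat_l with (r := L) in Hy; auto.
  replace (L * (e / L)) with e in Hy by (field; lra). exact Hy.
Qed.

Lemma eps_cont_nonexpansive2 g1 g2 (op : R -> R -> R) :
  eps_cont g1 -> eps_cont g2 ->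
  (forall u v u' v', Rabs (op u v - op u' v') <= Rmax (Rabs (u - u')) (Rabs (v - v'))) ->
  eps_cont (fun y => op (g1 y) (g2 y)).
Proof.
  intros H1 H2 Hop x Hx e He.
  destruct (H1 x Hx e He) as [l1 [d1 [Hl1 [Hd1 Hy1]]]].
  destruct (H2 x Hx e He) as [l2 [d2 [Hl2 [Hd2 Hy2]]]].
  exists (l1 ++ l2), (Rmin d1 d2).
  split; [apply Forall_app; auto|split; [apply Rmin_glb_lt; auto|]].
  intros y Dy Hc. eapply Rle_lt_trans; [apply Hop|]. apply Rmax_lub_lt.
  - apply Hy1; auto. intros g Hg.
    eapply Rlt_le_trans; [apply Hc, in_or_app; auto|apply Rmin_l].
  - apply Hy2; auto. intros g Hg.
    eapply Rlt_le_trans; [apply Hc, in_or_app; auto|apply Rmin_r].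
Qed.

Lemma Ccont_max f g :
  Ccont D G f -> Ccont D G g -> Ccont D G (fun y => Rmax (f y) (g y)).
Proof.
  intros Hf Hg. apply eps_cont_Ccont, eps_cont_nonexpansive2;
    [apply Ccont_eps_cont; auto|apply Ccont_eps_cont; auto|apply Rmax_nonexpansive].
Qed.

Lemma Ccont_min_const s f : Ccont D G f -> Ccont D G (fun y => Rmin s (f y)).
Proof.
  intros Hf. apply eps_cont_Ccont, (eps_cont_nonexpansive2 (fun _ => s));
    [apply eps_cont_const|apply Ccont_eps_cont; auto|apply Rmin_nonexpansive].
Qed.

End InitialTopology.

Definition ramp (a K t : R) : R := t + K * Rmax 0 (t - a).

Lemma ramp_lipschitz a K :
  0 <= K -> forall u v, Rabs (ramp a K u - ramp a K v) <= (1 + K) * Rabs (u - v).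
Proof.
  intros HK u v. unfold ramp.
  assert (Hm : Rabs (Rmax 0 (u - a) - Rmax 0 (v - a)) <= Rabs (u - v)).
  { unfold Rmax; repeat destruct Rle_dec; unfold Rabs; repeat destruct Rcase_abs; lra. }
  replace (u + K * Rmax 0 (u - a) - (v + K * Rmax 0 (v - a)))
    with ((u - v) + K * (Rmax 0 (u - a) - Rmax 0 (v - a))) by ring.
  eapply Rle_trans; [apply Rabs_triang|]. rewrite Rabs_mult, (Rabs_pos_eq K HK).
  assert (K * Rabs (Rmax 0 (u - a) - Rmax 0 (v - a)) <= K * Rabs (u - v))
    by (apply Rmult_le_compat_l; auto). lra.
Qed.

Lemma ramp_cut a K t : Rmin (ramp a K t) a <= t.
Proof.
  unfold ramp. destruct (Rle_dec t a).
  - rewrite Rmax_left, Rmult_0_r, Rplus_0_r by lra. apply Rmin_l.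
  - eapply Rle_trans; [apply Rmin_r|]. lra.
Qed.

Lemma ramp_high a K t delta : 0 <= K -> a + delta <= t -> t + K * delta <= ramp a K t.
Proof.
  intros HK Ht. unfold ramp. apply Rplus_le_compat_l, Rmult_le_compat_l; auto.
  eapply Rle_trans; [|apply Rmax_r]. lra.
Qed.

Section MaxMinMeasure.
Context {S : Type} (D : S -> Prop) (G : (S -> R) -> Prop) (mu : (S -> R) -> R)
  (Hmu : is_maxmin D G mu).

Lemma maxmin_const c : mu (fun _ => c) = c.
Proof. apply Hmu. Qed.

Lemma maxmin_max phi psi :
  Ccont D G phi -> Ccont D G psi -> mu (fun x => Rmax (phi x) (psi x)) = Rmax (mu phi) (mu psi).
Proof. apply Hmu. Qed.

Lemma maxmin_monotone phi psi :
  Ccont D G phi -> Ccont D G psi -> (forall x, D x -> phi x <= psi x) -> mu phi <= mu psi.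
Proof.
  destruct Hmu as [Hext _]. intros Hphi Hpsi Hle.
  assert (E : mu (fun x => Rmax (phi x) (psi x)) = mu psi).
  { apply Hext; [apply Ccont_max; auto|auto|]. intros x Hx. apply Rmax_right; auto. }
  rewrite maxmin_max in E by auto. rewrite <- E. apply Rmax_l.
Qed.

(* cut principle: if mu phi < s and phi dominates psi truncated at s,
   then mu psi <= mu phi, although psi itself need not lie below phi *)
Lemma maxmin_cut psi phi s :
  Ccont D G psi -> Ccont D G phi -> mu phi < s ->
  (forall x, D x -> Rmin (psi x) s <= phi x) -> mu psi <= mu phi.
Proof.
  destruct Hmu as [_ [_ [_ Hmin]]]. intros Hpsi Hphi Hs Hle.
  assert (M : mu (fun x => Rmin s (psi x)) <= mu phi).
  { apply maxmin_monotone; [apply Ccont_min_const; auto|auto|].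
    intros x Hx. rewrite Rmin_comm. auto. }
  rewrite Hmin in M by auto. unfold Rmin in M. destruct Rle_dec; lra.
Qed.

Lemma maxmin_ramp f a K :
  Ccont D G f -> mu f < a -> 0 <= K -> mu (fun y => ramp a K (f y)) <= mu f.
Proof.
  intros Hf Ha HK. apply (maxmin_cut _ _ a); auto.
  - apply eps_cont_Ccont, (eps_cont_lipschitz _ _ f _ (1 + K));
      [apply Ccont_eps_cont; auto|lra|apply ramp_lipschitz; auto].
  - intros y _. apply ramp_cut.
Qed.

End MaxMinMeasure.

Lemma coord_ball_open {Ix : Type} (D : (Ix -> R) -> Prop) (x : Ix -> R) (a : Ix) (r : R) :
  open_in D (coord_gen Ix) (fun y => Rabs (y a - x a) < r).
Proof.
  intros y _ Hy. exists ((fun w => w a) :: nil), (r - Rabs (y a - x a)).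
  split; [constructor; [exists a; reflexivity|constructor]|split; [lra|]].
  intros w _ Hw. specialize (Hw _ (or_introl eq_refl)). simpl in Hw.
  pose proof (Rabs_triang (w a - y a) (y a - x a)) as T.
  replace (w a - y a + (y a - x a)) with (w a - x a) in T by ring. lra.
Qed.

Lemma proj_Ccont {Ix : Type} (D : (Ix -> R) -> Prop) (a : Ix) :
  Ccont D (coord_gen Ix) (fun y => y a).
Proof. apply eps_cont_Ccont, eps_cont_gen. exists a; reflexivity. Qed.

Section Barycenter.
Context {Ix : Type} (A : (Ix -> R) -> Prop) (mu : ((Ix -> R) -> R) -> R)
  (Hmu : is_maxmin A (coord_gen Ix) mu).

(* a continuous function of the coordinate y_j, of measure at most xi mu j,
   which reaches s as soon as y_j exceeds xi mu j + d *)
Definition steep (d s : R) (j : Ix) (y : Ix -> R) : R :=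
  ramp (xi mu j + d / 2) (2 * Rabs (s - xi mu j) / d) (y j).

Lemma steep_slope_nonneg d s j : 0 < d -> 0 <= 2 * Rabs (s - xi mu j) / d.
Proof.
  intros Hd. apply Rmult_le_pos; [|left; apply Rinv_0_lt_compat; auto].
  pose proof (Rabs_pos (s - xi mu j)); lra.
Qed.

Lemma steep_Ccont d s j : 0 < d -> Ccont A (coord_gen Ix) (steep d s j).
Proof.
  intros Hd. apply eps_cont_Ccont.
  apply (eps_cont_lipschitz _ _ (fun y => y j) _ (1 + 2 * Rabs (s - xi mu j) / d)).
  - apply eps_cont_gen. exists j; reflexivity.
  - pose proof (steep_slope_nonneg d s j Hd); lra.
  - apply ramp_lipschitz, steep_slope_nonneg, Hd.
Qed.

Lemma steep_measure d s j : 0 < d -> mu (steep d s j) <= xi mu j.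
Proof.
  intros Hd. apply (maxmin_ramp A _ mu Hmu (fun y => y j));
    [apply proj_Ccont|unfold xi; lra|apply steep_slope_nonneg, Hd].
Qed.

Lemma steep_high d s j y : 0 < d -> xi mu j + d < y j -> s <= steep d s j y.
Proof.
  intros Hd Hy. unfold steep.
  pose proof (ramp_high (xi mu j + d / 2) (2 * Rabs (s - xi mu j) / d) (y j) (d / 2)
    (steep_slope_nonneg d s j Hd) ltac:(lra)) as Hr.
  replace (2 * Rabs (s - xi mu j) / d * (d / 2)) with (Rabs (s - xi mu j)) in Hr by (field; lra).
  pose proof (Rle_abs (s - xi mu j)). lra.
Qed.

Fixpoint barrier (d s b : R) (S : list Ix) (y : Ix -> R) : R :=
  match S with
  | nil => b
  | j :: S' => Rmax (steep d s j y) (barrier d s b S' y)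
  end.

Lemma barrier_Ccont d s b S : 0 < d -> Ccont A (coord_gen Ix) (barrier d s b S).
Proof.
  intros Hd. induction S as [|j S IH].
  - apply eps_cont_Ccont, eps_cont_const.
  - apply Ccont_max; auto. apply steep_Ccont, Hd.
Qed.

Lemma barrier_measure d s b S :
  0 < d -> b < s -> (forall j, In j S -> xi mu j < s) -> mu (barrier d s b S) < s.
Proof.
  intros Hd Hb. induction S as [|j S IH]; intros HS.
  - change (mu (fun _ => b) < s). rewrite (maxmin_const A _ mu Hmu). exact Hb.
  - simpl. rewrite (maxmin_max A _ mu Hmu) by (apply steep_Ccont || apply barrier_Ccont; exact Hd).
    apply Rmax_lub_lt.
    + eapply Rle_lt_trans; [apply steep_measure, Hd|apply HS; left; reflexivity].
    + apply IH. intros i Hi. apply HS; right; exact Hi.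
Qed.

Lemma barrier_ge_base d s b S y : b <= barrier d s b S y.
Proof. induction S as [|j S IH]; simpl; [lra|]. eapply Rle_trans; [apply IH|apply Rmax_r]. Qed.

Lemma barrier_ge_high d s b S y j :
  0 < d -> In j S -> xi mu j + d < y j -> s <= barrier d s b S y.
Proof.
  intros Hd Hj Hy. induction S as [|i S IH]; [destruct Hj|].
  destruct Hj as [<-|Hj]; simpl.
  - eapply Rle_trans; [apply steep_high; eauto|apply Rmax_l].
  - eapply Rle_trans; [apply IH; exact Hj|apply Rmax_r].
Qed.

(* If mu psi >= s > b and the coordinates of xi mu in S are below s, then
   some point of A has psi > b and lies below xi mu + d on S; otherwise psi
   truncated at s would be dominated by a barrier of measure < s. *)
Lemma witness_below psi (S : list Ix) d b s :
  Ccont A (coord_gen Ix) psi -> 0 < d -> b < s -> s <= mu psi ->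
  (forall j, In j S -> xi mu j < s) ->
  exists y, A y /\ b < psi y /\ forall j, In j S -> y j <= xi mu j + d.
Proof.
  intros Hpsi Hd Hbs Hs HS. apply NNPP; intro Hnone.
  assert (Hdom : forall y, A y -> Rmin (psi y) s <= barrier d s b S y).
  { intros y Hy. destruct (Rle_dec (psi y) b) as [Hb|Hb].
    - eapply Rle_trans; [apply Rmin_l|]. eapply Rle_trans; [exact Hb|apply barrier_ge_base].
    - assert (exists j, In j S /\ xi mu j + d < y j) as [j [Hj Hjy]].
      { apply NNPP; intro N. apply Hnone. exists y. split; [exact Hy|split; [lra|]].
        intros j Hj. apply Rnot_lt_le. intro Hlt. apply N. exists j; auto. }
      eapply Rle_trans; [apply Rmin_r|]. eapply barrier_ge_high; eauto. }
  pose proof (barrier_measure d s b S Hd Hbs HS) as Hlt.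
  pose proof (maxmin_cut A _ mu Hmu psi _ s Hpsi (barrier_Ccont d s b S Hd) Hlt Hdom).
  lra.
Qed.

Lemma finite_upper_bound {T : Type} (f : T -> R) (L : list T) :
  exists M, forall p, In p L -> f p < M.
Proof.
  induction L as [|a L [M HM]]; [exists 0; intros p []|].
  exists (Rmax M (f a + 1)). intros p [<-|Hp].
  - eapply Rlt_le_trans; [|apply Rmax_r]. lra.
  - eapply Rlt_le_trans; [apply HM, Hp|apply Rmax_l].
Qed.

Lemma witness_low (F : list Ix) d :
  0 < d -> exists y, A y /\ forall j, In j F -> y j <= xi mu j + d.
Proof.
  intros Hd. destruct (finite_upper_bound (xi mu) F) as [M HM].
  destruct (witness_below (fun _ => M) F d (M - 1) M) as [y [Hy [_ HyF]]]; eauto.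
  - apply eps_cont_Ccont, eps_cont_const.
  - lra.
  - right; symmetry; apply (maxmin_const A _ mu Hmu).
Qed.

Lemma witness_high_at (F : list Ix) d i :
  0 < d -> exists y, A y /\ xi mu i - d < y i /\
    forall j, In j F -> xi mu j + d < xi mu i -> y j <= xi mu j + d.
Proof.
  intros Hd.
  set (low := fun j => if Rlt_dec (xi mu j + d) (xi mu i) then true else false).
  destruct (witness_below (fun y => y i) (filter low F) d (xi mu i - d) (xi mu i - d / 2))
    as [y [Hy [Hyi HyF]]].
  - apply proj_Ccont.
  - exact Hd.
  - lra.
  - unfold xi; lra.
  - intros j Hj. apply filter_In in Hj. destruct Hj as [_ Hj]. unfold low in Hj.
    destruct Rlt_dec; [lra|discriminate].
  - exists y. split; [exact Hy|split; [exact Hyi|]]. intros j Hj Hlt. apply HyF, filter_In.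
    split; [exact Hj|]. unfold low. destruct Rlt_dec; [reflexivity|contradiction].
Qed.

(* max-min convexity glues the witnesses into a point of A that is d-close
   to xi mu on every coordinate of F *)
Lemma barycenter_approx (F : list Ix) d :
  maxmin_convex A -> 0 < d ->
  exists y, A y /\ forall j, In j F -> Rabs (y j - xi mu j) <= d.
Proof.
  intros Hconv Hd.
  assert (Hglue : forall H : list Ix, exists y, A y /\
            (forall j, In j F -> y j <= xi mu j + d) /\
            (forall j, In j H -> xi mu j - d <= y j)).
  { induction H as [|a H [y [Hy [Hup Hlow]]]].
    - destruct (witness_low F d Hd) as [y [Hy Hup]]. exists y. split; auto. split; auto.
      intros j [].
    - destruct (witness_high_at F d a Hd) as [w [Hw [Hwa Hwup]]].
      exists (fun b => Rmax (y b) (Rmin (xi mu a) (w b))).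
      split; [apply Hconv; auto|split].
      + intros j Hj. apply Rmax_lub; auto. destruct (Rlt_dec (xi mu j + d) (xi mu a)).
        * eapply Rle_trans; [apply Rmin_r|auto].
        * eapply Rle_trans; [apply Rmin_l|lra].
      + intros j [<-|Hj].
        * eapply Rle_trans; [|apply Rmax_r]. apply Rmin_glb; lra.
        * eapply Rle_trans; [apply Hlow, Hj|apply Rmax_l]. }
  destruct (Hglue F) as [y [Hy [Hup Hlow]]]. exists y. split; auto.
  intros j Hj. specialize (Hup j Hj). specialize (Hlow j Hj). apply Rabs_le. lra.
Qed.

End Barycenter.

Lemma finite_positive_lower_bound {T : Type} (r : T -> R) (L : list T) :
  exists e, 0 < e /\ forall p, In p L -> 0 < r p -> e <= r p.
Proof.
  induction L as [|a L [e [He H]]]; [exists 1; split; [lra|intros p []]|].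
  destruct (Rlt_dec 0 (r a)).
  - exists (Rmin e (r a)). split; [apply Rmin_glb_lt; auto|].
    intros p [<-|Hp] Hr; [apply Rmin_r|]. eapply Rle_trans; [apply Rmin_l|auto].
  - exists e. split; auto. intros p [<-|Hp] Hr; [contradiction|auto].
Qed.

(* R^I is Hausdorff, so a compact set avoiding z is separated from z by
   finitely many coordinates *)
Lemma compact_avoids_point {Ix : Type} (A : (Ix -> R) -> Prop) (z : Ix -> R) :
  compact_in A (coord_gen Ix) -> ~ A z ->
  exists (F : list Ix) (e : R), 0 < e /\
    forall y, A y -> exists j, In j F /\ e < Rabs (y j - z j).
Proof.
  intros Hcomp Hz.
  set (r := fun p : (Ix -> R) * Ix => Rabs (fst p (snd p) - z (snd p)) / 2).
  set (U := fun (p : (Ix -> R) * Ix) (y : Ix -> R) => Rabs (y (snd p) - fst p (snd p)) < r p).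
  assert (Hcov : forall y, A y -> exists p, U p y).
  { intros y Hy. assert (exists a, y a <> z a) as [a Ha].
    { apply NNPP; intro N. apply Hz. replace z with y; auto.
      apply functional_extensionality. intro a. apply NNPP; intro N2. apply N. exists a; auto. }
    exists (y, a). unfold U, r; simpl. rewrite Rminus_diag, Rabs_R0.
    assert (0 < Rabs (y a - z a)) by (apply Rabs_pos_lt; lra). lra. }
  destruct (Hcomp _ U (fun p => coord_ball_open A (fst p) (snd p) (r p)) Hcov) as [L HL].
  destruct (finite_positive_lower_bound r L) as [e [He Hre]].
  exists (map snd L), e. split; [exact He|]. intros y Hy.
  destruct (HL y Hy) as [[x a] [Hp Up]]. unfold U, r in Up, Hre; simpl in Up.
  exists a. split; [exact (in_map snd L (x, a) Hp)|].
  pose proof (Rabs_pos (y a - x a)).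
  specialize (Hre (x, a) Hp ltac:(simpl; lra)); simpl in Hre.
  pose proof (Rabs_triang (x a - y a) (y a - z a)) as T.
  replace (x a - y a + (y a - z a)) with (x a - z a) in T by ring.
  rewrite (Rabs_minus_sym (x a) (y a)) in T. lra.
Qed.

Lemma barycenter_mem {Ix : Type} (A : (Ix -> R) -> Prop) (mu : ((Ix -> R) -> R) -> R) :
  maxmin_convex A -> compact_in A (coord_gen Ix) -> is_maxmin A (coord_gen Ix) mu ->
  A (xi mu).
Proof.
  intros Hconv Hcomp Hmu. apply NNPP; intro Hout.
  destruct (compact_avoids_point A (xi mu) Hcomp Hout) as [F [e [He Hsep]]].
  destruct (barycenter_approx A mu Hmu F e Hconv He) as [y [Hy Hclose]].
  destruct (Hsep y Hy) as [j [Hj Hfar]].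
  specialize (Hclose j Hj). lra.
Qed.

Lemma cont_map_into_coords {S Ix : Type} (D : S -> Prop) (G : (S -> R) -> Prop)
  (A : (Ix -> R) -> Prop) (f : S -> Ix -> R) :
  (forall x, D x -> A (f x)) -> (forall a, G (fun x => f x a)) ->
  cont_map D G A (coord_gen Ix) f.
Proof.
  intros Hf HG. split; [exact Hf|].
  intros U HU x Dx Ux.
  destruct (HU (f x) (Hf x Dx) Ux) as [l [d [Hl [Hd Hy]]]].
  rewrite Forall_forall in Hl.
  exists (map (fun g => fun x => g (f x)) l), d. split; [|split; [exact Hd|]].
  - rewrite Forall_forall. intros h Hh. apply in_map_iff in Hh.
    destruct Hh as [g [<- Hg]]. destruct (Hl g Hg) as [a ->]. apply HG.
  - intros y Dy Hc. apply Hy; [apply Hf, Dy|].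
    intros g Hg. exact (Hc _ (in_map (fun g => fun x => g (f x)) l g Hg)).
Qed.

Theorem mainTheorem20 (I : Type) (A : (I -> R) -> Prop)
  (Hconv : maxmin_convex A) (Hcomp : compact_in A (coord_gen I)) :
  cont_map (Jdom A (coord_gen I)) (Jgen A (coord_gen I)) A (coord_gen I) (@xi I)
  /\ (forall x, A x -> xi (eta x) = x)
  /\ (forall M, Jdom (Jdom A (coord_gen I)) (Jgen A (coord_gen I)) M ->
        xi (psiJ M) = xi (Jmap (@xi I) M)).
Proof.
  split; [|split].
  - apply cont_map_into_coords.
    + intros mu Hmu. apply barycenter_mem; auto.
    + intro a. exists (fun x => x a). split; [apply proj_Ccont|reflexivity].
  -
    intros x _. reflexivity.
  -
    intros M _. reflexivity.
Qed.
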